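(* For all positive integers $n,p$, $$\beta^*(n,p,\infty)=\Omega\left(n^{2/3}p^{2/3}+n+p\right).$$
   Context: A path system is a pair $S=(V,\Pi)$ where $V$ is a finite ground set of nodes and $\Pi$ is a multiset of finite sequences of nodes (paths), each containing each node at most once. Its size is $\|S\|=\sum_{\pi\in\Pi}|\pi|$ ($|\pi|$ = number of nodes). Write $x<_\pi y$ if $x,y\in\pi$ and $x$ strictly precedes $y$ in $\pi$. A $b$-bridge consists of $b$ distinct nodes $v_1,\dots,v_b$ and $b$ distinct paths $\pi_1,\dots,\pi_b$ with $v_i<_{\pi_i}v_{i+1}$ for $1\le i\le b-1$ and $v_1<_{\pi_b}v_b$; $\pi_b$ is the river and the others are arcs. An ordered path system is a path system with a total order on its paths; an ordered bridge is a bridge whose river comes after all of its arcs in this order. The ordered bridge girth is the least $b$ such that there is an ordered $b$-bridge ($\infty$ if none). $\beta^*(n,p,k)$ is the maximum possible size of an ordered path system with $n$ nodes, $p$ paths and ordered bridge girth $>k$. *)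

From mathcomp Require Import all_boot.
From Stdlib Require Import Reals.
Set Implicit Arguments. Unset Strict Implicit. Unset Printing Implicit Defensive.

(* An ordered path system on the node set 'I_n: a list of paths (the list
   order is the total order on paths; the list is a multiset of paths). *)
Definition path_system (n : nat) (P : seq (seq 'I_n)) : Prop :=
  all uniq P.

Definition ps_size (n : nat) (P : seq (seq 'I_n)) : nat :=
  sumn (map size P).

Definition prec (n : nat) (pi : seq 'I_n) (x y : 'I_n) : bool :=
  [&& x \in pi, y \in pi & index x pi < index y pi].

(* An ordered b-bridge (0-based indices): nodes v 0, ..., v (b-1) distinct,
   paths (given by their positions w i in the list P) w 0, ..., w (b-1)
   distinct, with v i <_{P_(w i)} v (i+1) for i < b-1 and
   v 0 <_{P_(w (b-1))} v (b-1); the river w (b-1) comes after all arcs. *)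
Definition ordered_bridge (n : nat) (P : seq (seq 'I_n)) (b : nat)
    (v : nat -> 'I_n) (w : nat -> nat) : Prop :=
  (0 < b)%N /\
  {in [pred i | (i < b)%N] &, injective v} /\
  {in [pred i | (i < b)%N] &, injective w} /\
  (forall i, (i < b)%N -> (w i < size P)%N) /\
  (forall i, (i.+1 < b)%N -> prec (nth [::] P (w i)) (v i) (v i.+1)) /\
  prec (nth [::] P (w b.-1)) (v 0) (v b.-1) /\
  (forall i, (i < b.-1)%N -> (w i < w b.-1)%N).

(* ordered bridge girth = infinity, i.e. > every k *)
Definition no_ordered_bridge (n : nat) (P : seq (seq 'I_n)) : Prop :=
  ~ exists b v w, @ordered_bridge n P b v w.

(* Balanced case (2p < n^2 and 2n < p^2): put a K x 2KL grid of points into the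
   n nodes and take the K L^2 lines y = a x + b with slopes a < L and
   intercepts b < K L, each traversed by increasing x and listed by
   nondecreasing slope; with K^3 ~ n^2/p and L^3 ~ p^2/n this has size
   K^2 L^2 ~ (np)^(2/3).  In an ordered bridge every arc has slope at most the
   slope s of the river, so y - s x never increases along the arcs, while it
   takes equal values at the two ends of the river.  Hence the first arc has
   slope s and shares a point with the river, so it is the river itself.
   Otherwise one path through all nodes followed by p - 1 one-node paths has
   size n + p - 1, which already dominates (np)^(2/3). *)

From Stdlib Require Import Reals Lra.
From mathcomp Require Import all_boot zify.
Set Implicit Arguments. Unset Strict Implicit. Unset Printing Implicit Defensive.

Section Grid.

Variables (N K L : nat).
Hypothesis grid_fits : 2 * K * K * L <= N.+1.

Definition grid_x (u : 'I_N.+1) : nat := u %% K.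
Definition grid_y (u : 'I_N.+1) : nat := u %/ K.

Definition grid_point (x y : nat) : 'I_N.+1 := inord (x + K * y).

Definition grid_line (a b : nat) : seq 'I_N.+1 :=
  [seq grid_point x (a * x + b) | x <- iota 0 K].

Definition slope (j : nat) := j %/ (K * L).
Definition intercept (j : nat) := j %% (K * L).

Definition grid_lines := [seq grid_line (slope j) (intercept j) | j <- iota 0 (K * L * L)].

Definition grid_system (p : nat) := grid_lines ++ nseq (p - K * L * L) [::].

Lemma grid_pointK x y : x < K -> y < 2 * K * L ->
  grid_x (grid_point x y) = x /\ grid_y (grid_point x y) = y.
Proof.
move=> x_lt y_lt; have K_gt0 : 0 < K by lia.
rewrite /grid_x /grid_y /grid_point inordK; last by apply: leq_trans grid_fits; nia.
by rewrite addnC mulnC modnMDl divnMDl // modn_small // divn_small // addn0.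
Qed.

Lemma slope_intercept_lt j : j < K * L * L -> slope j < L /\ intercept j < K * L.
Proof.
move=> j_lt; have KL_gt0 : 0 < K * L by rewrite lt0n; apply: contraTneq j_lt => ->.
by rewrite /slope /intercept ltn_divLR // ltn_pmod // mulnC.
Qed.

Lemma grid_line_point a b u : a < L -> b < K * L -> u \in grid_line a b ->
  let x := index u (grid_line a b) in
  [/\ x < K, grid_x u = x & grid_y u = a * x + b].
Proof.
move=> a_lt b_lt u_in x.
have x_lt : x < K by rewrite -index_mem /grid_line size_map size_iota in u_in.
have -> : u = grid_point x (a * x + b).
  by rewrite -{1}(nth_index u u_in) (nth_map 0) ?size_iota // nth_iota.
have y_lt : a * x + b < 2 * K * L by nia.
by have [-> ->] := grid_pointK x_lt y_lt.
Qed.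

Lemma grid_line_uniq a b : a < L -> b < K * L -> uniq (grid_line a b).
Proof.
move=> a_lt b_lt; rewrite map_inj_in_uniq ?iota_uniq // => x y.
rewrite !mem_iota !add0n => x_lt y_lt /(congr1 grid_x).
have ord_lt z : z < K -> a * z + b < 2 * K * L by nia.
by rewrite !(grid_pointK _ (ord_lt _ _)).1.
Qed.

Lemma nth_grid_system p j :
  nth [::] (grid_system p) j =
  if j < K * L * L then grid_line (slope j) (intercept j) else [::].
Proof.
rewrite nth_cat size_map size_iota; case: ifP => j_lt.
  by rewrite (nth_map 0) ?size_iota // nth_iota.
by rewrite nth_nseq if_same.
Qed.

Lemma prec_grid_system p j u v : prec (nth [::] (grid_system p) j) u v ->
  [/\ grid_x u < grid_x v, grid_y u = slope j * grid_x u + intercept j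
    & grid_y v = slope j * grid_x v + intercept j].
Proof.
rewrite nth_grid_system; case: ifP => [j_lt|_]; last by rewrite /prec in_nil.
have [a_lt b_lt] := slope_intercept_lt j_lt.
case/and3P=> u_in v_in lt_uv.
have [_ -> ->] := grid_line_point a_lt b_lt u_in.
by have [_ -> ->] := grid_line_point a_lt b_lt v_in.
Qed.

(* From [u] to [v], y rises by at most [a] per unit of x; stated without
   truncated subtraction. *)
Definition slope_le (a : nat) (u v : 'I_N.+1) :=
  grid_y v + a * grid_x u <= grid_y u + a * grid_x v.

Lemma slope_le_chain a (f : nat -> 'I_N.+1) i j : i <= j ->
  (forall k, i <= k < j -> slope_le a (f k) (f k.+1)) -> slope_le a (f i) (f j).
Proof.
rewrite /slope_le; elim: j => [|j IH]; first by rewrite leqn0 => /eqP->.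
rewrite leq_eqVlt ltnS => /orP[/eqP-> //|i_le step].
have := step j; rewrite i_le ltnSn => /(_ isT).
have : grid_y (f j) + a * grid_x (f i) <= grid_y (f i) + a * grid_x (f j).
  by apply: IH => // k /andP[ik kj]; apply: step; rewrite ik ltnW.
lia.
Qed.

Lemma prec_grid_system_slope_le p j a u v :
  prec (nth [::] (grid_system p) j) u v -> slope j <= a -> slope_le a u v.
Proof. by case/prec_grid_system=> x_lt yu yv ja; rewrite /slope_le yu yv; nia. Qed.

Lemma grid_system_no_ordered_bridge p : no_ordered_bridge (grid_system p).
Proof.
move=> [b [v [w [_ [_ [_ [_ [arc [river arc_before]]]]]]]]].
set r := w b.-1 in river arc_before.
have [river_x river_y0 river_y1] := prec_grid_system river.
have b_gt1 : 1 < b.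
  case: (ltnP 1 b) river_x => // b_le1; have -> : b.-1 = 0 by lia.
  by rewrite ltnn.
have arc_slope i : i.+1 < b -> slope (w i) <= slope r.
  by move=> i_lt; apply/leq_div2r/ltnW/arc_before; lia.
have chain : slope_le (slope r) (v 1) (v b.-1).
  apply: slope_le_chain => [|k /andP[k_ge k_lt]]; first lia.
  by apply: prec_grid_system_slope_le (arc k _) (arc_slope k _); lia.
have [x01 y0 y1] := prec_grid_system (arc 0 b_gt1).
have := arc_slope 0 b_gt1; rewrite leq_eqVlt => /orP[/eqP same_slope|steeper].
- have same_intercept : intercept (w 0) = intercept r.
    by move: y0; rewrite river_y0 same_slope; lia.
  have := arc_before 0 (ltac:(lia)).
  rewrite (divn_eq (w 0) (K * L)) (divn_eq r (K * L)) -!/(slope _) -!/(intercept _).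
  by rewrite same_slope same_intercept ltnn.
- move: chain; rewrite /slope_le river_y1 y1; nia.
Qed.

Lemma size_grid_system p : K * L * L <= p -> size (grid_system p) = p.
Proof. by move=> le_p; rewrite size_cat size_map size_iota size_nseq subnKC. Qed.

Lemma grid_system_path_system p : path_system (grid_system p).
Proof.
rewrite /path_system all_cat all_nseq orbT andbT.
apply/allP=> s /mapP[j]; rewrite mem_iota => /andP[_ j_lt] ->.
by have [a_lt b_lt] := slope_intercept_lt j_lt; apply: grid_line_uniq.
Qed.

Lemma ps_size_grid_system p : ps_size (grid_system p) = K * L * L * K.
Proof.
rewrite /ps_size map_cat sumn_cat map_nseq sumn_nseq /= addn0 -map_comp.
rewrite -[in RHS](size_iota 0 (K * L * L)).
by elim: (iota 0 _) => //= j s ->; rewrite size_map size_iota mulSn.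
Qed.

End Grid.

Definition long_path_system (N p : nat) : seq (seq 'I_N.+1) :=
  enum 'I_N.+1 :: nseq p.-1 [:: ord0].

Lemma size_long_path_system N p : 0 < p -> size (long_path_system N p) = p.
Proof. by case: p => //= p _; rewrite size_nseq. Qed.

Lemma long_path_system_path_system N p : path_system (long_path_system N p).
Proof. by rewrite /path_system /= enum_uniq all_nseq orbT. Qed.

Lemma ps_size_long_path_system N p : ps_size (long_path_system N p) = N.+1 + p.-1.
Proof. by rewrite /ps_size /= size_enum_ord map_nseq sumn_nseq mul1n. Qed.

Lemma prec_long_path_system N p j u v :
  prec (nth [::] (long_path_system N p) j) u v -> j = 0.
Proof.
case: j => //= j; rewrite nth_nseq; case: ifP => _; last by rewrite /prec in_nil.
by rewrite /prec !mem_seq1 => /and3P[/eqP-> /eqP->]; rewrite ltnn.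
Qed.

Lemma long_path_system_no_ordered_bridge N p : no_ordered_bridge (long_path_system N p).
Proof.
move=> [b [v [w [_ [_ [_ [_ [arc [river arc_before]]]]]]]]].
case: (ltnP 1 b) => [b_gt1|b_le1].
- have := arc_before 0 (ltac:(lia)).
  by rewrite (prec_long_path_system (arc 0 b_gt1)) (prec_long_path_system river).
- have b1_eq0 : b.-1 = 0 by lia.
  by move: river; rewrite b1_eq0 /prec ltnn !andbF.
Qed.

Lemma exists_floor_cube_root c m : 0 < c -> exists k, k ^ 3 * c <= m < k.+1 ^ 3 * c.
Proof.
move=> c_gt0; elim: m => [|m [k /andP[k_le k_lt]]]; first by exists 0; rewrite mul1n.
case: (ltnP m.+1 (k.+1 ^ 3 * c)) => [m_lt|m_ge]; first by exists k; rewrite m_lt andbT ltnW.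
exists k.+1; rewrite m_ge /=.
by apply: leq_ltn_trans k_lt _; rewrite ltn_pmul2r // ltn_exp2r.
Qed.

Lemma grid_parameters n p : 2 * p < n * n -> 2 * n < p * p ->
  exists K L, [/\ 2 * K * K * L <= n, K * L * L <= p & n * p <= 256 * (K * L) ^ 3].
Proof.
move=> p_small n_small.
have n_gt0 : 0 < n by lia.
have p_gt0 : 0 < p by lia.
have [K /andP[K_le K_lt]] := exists_floor_cube_root (n * n) (ltac:(lia) : 0 < 2 * p).
have [L /andP[L_le L_lt]] := exists_floor_cube_root (p * p) (ltac:(lia) : 0 < 2 * n).
have K_gt0 : 0 < K by case: K {K_le} K_lt => //; rewrite mul1n; lia.
have L_gt0 : 0 < L by case: L {L_le} L_lt => //; rewrite mul1n; lia.
exists K, L; split=> //.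
- rewrite -(@leq_exp2r _ _ 3) // -(@leq_pmul2r (p * p * n)) ?muln_gt0 ?p_gt0 //.
  by have := leq_mul (leq_mul K_le K_le) L_le; lia.
- rewrite -(@leq_exp2r _ _ 3) // -(@leq_pmul2r (n * n * p)) ?muln_gt0 ?n_gt0 //.
  by have := leq_mul (leq_mul L_le L_le) K_le; lia.
- have np_lt : n * p < 4 * (K.+1 * L.+1) ^ 3.
    rewrite -(@ltn_pmul2r (n * p)) ?muln_gt0 ?n_gt0 //.
    by have := ltn_mul K_lt L_lt; clear; lia.
  have : (K.+1 * L.+1) ^ 3 <= (4 * (K * L)) ^ 3.
    by rewrite leq_exp2r //; clear -K_gt0 L_gt0; nia.
  clear -np_lt; lia.
Qed.

Lemma leq_of_sq_mul_leq_cube n p s : n <= p * p -> (n * p) ^ 2 <= s ^ 3 -> n <= s.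
Proof.
move=> n_le np_le; rewrite -(@leq_exp2r _ _ 3) //; apply: leq_trans np_le.
by rewrite expnMn (expnSr n 2) leq_mul2l expnS expn1 n_le orbT.
Qed.

Lemma sq_mul_leq_cube n p s : p * p <= 2 * n -> n <= s -> (n * p) ^ 2 <= 2 * s ^ 3.
Proof.
move=> p_le n_le; have n3 : n ^ 3 <= s ^ 3 by rewrite leq_exp2r.
have : (n * p) ^ 2 <= 2 * n ^ 3 by rewrite expnMn expnS; nia.
lia.
Qed.

Lemma exists_bridgeless_system N p : 0 < p ->
  exists P : seq (seq 'I_N.+1),
    [/\ size P = p, path_system P, no_ordered_bridge P &
      [/\ N.+1 <= 64 * ps_size P, p <= 64 * ps_size P
        & (N.+1 * p) ^ 2 <= (64 * ps_size P) ^ 3]].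
Proof.
move=> p_gt0; set n := N.+1.
have [/andP[p_small n_small] | lopsided] :=
  boolP ((2 * p < n * n) && (2 * n < p * p)).
- have [K [L [fits p_ge np_le]]] := grid_parameters p_small n_small.
  exists (grid_system N K L p); rewrite size_grid_system ?ps_size_grid_system //.
  have np_bound : (n * p) ^ 2 <= (64 * (K * L * L * K)) ^ 3.
    by have := leq_mul np_le np_le; clear; lia.
  split=> //; [exact: grid_system_path_system | exact: grid_system_no_ordered_bridge|].
  split=> //; first by apply: leq_of_sq_mul_leq_cube np_bound; lia.
  by apply: leq_of_sq_mul_leq_cube (_ : p <= n * n) _; [lia | rewrite mulnC].
- exists (long_path_system N p); rewrite size_long_path_system ?ps_size_long_path_system //.
  split; [done | exact: long_path_system_path_system
         | exact: long_path_system_no_ordered_bridge |].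
  split; [lia | lia |].
  have : (n * p) ^ 2 <= 2 * (n + p.-1) ^ 3.
    have [n_le p_le] : n <= n + p.-1 /\ p <= n + p.-1 by lia.
    have [p_le2n | n_le2p] : p * p <= 2 * n \/ n * n <= 2 * p by lia.
    + exact: sq_mul_leq_cube p_le2n n_le.
    + by rewrite mulnC; exact: sq_mul_leq_cube n_le2p p_le.
  by rewrite expnMn; lia.
Qed.

Local Open Scope R_scope.

Lemma Rpower_two_thirds_le (x y : R) : 0 < x -> x ^ 2 <= y ^ 3 -> Rpower x (2 / 3) <= y.
Proof.
move=> x_gt0 le_xy.
have y_gt0 : 0 < y.
  have : 0 < x ^ 2 by apply: pow_lt.
  case: (Rlt_or_le 0 y) => // y_le0; have : y ^ 3 <= 0 by rewrite /=; nra.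
  lra.
have -> : Rpower x (2 / 3) = Rpower (x ^ 2) (/ 3).
  by rewrite -(Rpower_pow 2 x x_gt0) Rpower_mult /=; f_equal; lra.
have <- : Rpower (y ^ 3) (/ 3) = y.
  by rewrite -(Rpower_pow 3 y y_gt0) Rpower_mult -[RHS]Rpower_1 //=; f_equal; lra.
by apply: Rle_Rpower_l; [lra | split; [apply: pow_lt |]].
Qed.

Lemma INR_expn m k : INR (m ^ k) = INR m ^ k.
Proof. by elim: k => [|k IH]; rewrite ?expnS //= mult_INR IH. Qed.

Theorem theorem3p19 :
  exists c : R, (0 < c)%R /\
    forall n p : nat, (0 < n)%N -> (0 < p)%N ->
      exists P : seq (seq 'I_n),
        [/\ size P = p, path_system P, no_ordered_bridge P &
            (c * (Rpower (INR n) (2/3) * Rpower (INR p) (2/3) + INR n + INR p)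
               <= INR (ps_size P))%R].
Proof.
exists (1 / 192); split=> [|[//|N] p _ p_gt0]; first lra.
have [P [sizeP pathP bridgeP [n_le p_le np_le]]] := exists_bridgeless_system N p_gt0.
exists P; split=> //.
have INR_leq a b : (a <= b)%N -> INR a <= INR b by move/leP; apply: le_INR.
have INR_64 : INR 64 = 64 by rewrite /=; lra.
have [n_gt0 p_gt0'] : 0 < INR N.+1 /\ 0 < INR p by split; apply/lt_0_INR/ltP.
move/INR_leq: n_le; move/INR_leq: p_le; move/INR_leq: np_le.
rewrite !INR_expn !mult_INR INR_64 Rpower_mult_distr //.
by move=> /(Rpower_two_thirds_le (Rmult_lt_0_compat _ _ n_gt0 p_gt0')); lra.
Qed.
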